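(* Let $p,q$ be odd primes with $q-p=2$, let $\varepsilon\in\{1,-1\}$, let $D=D_1\cdots D_n$ ($n\ge 0$) be a product of distinct odd primes with $\gcd(pq,D)=1$, and let $E_D/\mathbb{Q}$ be the elliptic curve $y^2=x(x+\varepsilon pD)(x+\varepsilon qD)$. Then $E_D$ has no anomalous primes, i.e. $\mathrm{Anom}(E_D/\mathbb{Q})=\emptyset$.
   Context: A prime $l$ is anomalous for an elliptic curve $E/\mathbb{Q}$ if $E$ has good reduction at $l$ and $\#\widetilde{E}_l(\mathbb{F}_l)\equiv 0\pmod l$, where $\widetilde{E}_l$ is the reduction of $E$ modulo $l$. $\mathrm{Anom}(E/\mathbb{Q})$ denotes the set of anomalous primes for $E$. *)

From HB Require Import structures.
From mathcomp Require Import all_boot all_order all_algebra.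
Set Implicit Arguments. Unset Strict Implicit. Unset Printing Implicit Defensive.
Import Order.TTheory GRing.Theory Num.Theory.
Local Open Scope ring_scope.

(* y^2 + a1 x y + a3 y = x^3 + a2 x^2 + a4 x + a6 over Q *)
Record wmodel := WModel { wa1 : rat; wa2 : rat; wa3 : rat; wa4 : rat; wa6 : rat }.

Definition weq (E : wmodel) (x y : rat) : rat :=
  y ^+ 2 + wa1 E * x * y + wa3 E * y
  - (x ^+ 3 + wa2 E * x ^+ 2 + wa4 E * x + wa6 E).

(* standard discriminant (Silverman III.1) *)
Definition wdisc (E : wmodel) : rat :=
  let b2 := wa1 E ^+ 2 + 4 * wa2 E in
  let b4 := 2 * wa4 E + wa1 E * wa3 E in
  let b6 := wa3 E ^+ 2 + 4 * wa6 E in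
  let b8 := wa1 E ^+ 2 * wa6 E + 4 * wa2 E * wa6 E - wa1 E * wa3 E * wa4 E
            + wa2 E * wa3 E ^+ 2 - wa4 E ^+ 2 in
  - b2 ^+ 2 * b8 - 8 * b4 ^+ 3 - 27 * b6 ^+ 2 + 9 * b2 * b4 * b6.

Definition iso_models (E E' : wmodel) : Prop :=
  exists u r s t : rat, u != 0 /\
    forall X Y : rat,
      weq E (u ^+ 2 * X + r) (u ^+ 3 * Y + s * u ^+ 2 * X + t)
      = u ^+ 6 * weq E' X Y.

Definition integral_at (l : nat) (c : rat) : bool := ~~ (l %| `|denq c|)%N.

Definition good_model_at (l : nat) (E : wmodel) : bool :=
  [&& integral_at l (wa1 E), integral_at l (wa2 E), integral_at l (wa3 E),
      integral_at l (wa4 E), integral_at l (wa6 E)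
    & ~~ (l %| `|numq (wdisc E)|)%N].

Definition redF (l : nat) (c : rat) : 'F_l := (numq c)%:~R / (denq c)%:~R.

(* number of F_l-points (affine points plus the point at infinity) of the
   reduction modulo l of the model E *)
Definition npoints (l : nat) (E : wmodel) : nat :=
  (#|[set P : 'F_l * 'F_l |
      P.2 ^+ 2 + redF l (wa1 E) * P.1 * P.2 + redF l (wa3 E) * P.2
      == P.1 ^+ 3 + redF l (wa2 E) * P.1 ^+ 2 + redF l (wa4 E) * P.1
         + redF l (wa6 E)]|).+1.

(* l is anomalous for E: E has good reduction at l (some model of E is good
   at l) and #E~_l(F_l) = 0 mod l, counted on such a good model (the count
   does not depend on the good model chosen). *)
Definition anomalous (E : wmodel) (l : nat) : Prop :=
  prime l /\ exists E', iso_models E E' /\ good_model_at l E' /\ (l %| npoints l E')%N.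

(* E_D : y^2 = x (x + eps p D) (x + eps q D) = x^3 + eps(p+q)D x^2 + pqD^2 x *)
Definition E_D (eps : rat) (p q D : nat) : wmodel :=
  WModel 0 (eps * (p + q)%:R * D%:R) 0 ((p * q)%:R * D%:R ^+ 2) 0.

(* Every model of [E_D] has full rational 2-torsion: the 2-division polynomial
   [4 x^3 + b2 x^2 + 2 b4 x + b6] of any model splits over Q, its roots being
   the images of 0, -eps p D and -eps q D.  At an odd prime l of good reduction
   these roots are l-integral and stay distinct modulo l, so each of them gives
   one point of order 2 and every other abscissa gives 0 or 2 points:
   #E(F_l) = 4 + 2k with k <= l - 3, an even number between 4 and 2l - 2, hence
   prime to l.  At l = 2 there is no good model at all: since q - p = 2 and
   p q D is odd, the discriminant of any model is 2^6 (p q D^3)^2 times a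
   twelfth power, so its 2-adic valuation is 6 modulo 12 and never 0. *)

From mathcomp Require Import all_boot all_order all_algebra.
From mathcomp Require Import ring lra zify.

Set Implicit Arguments.
Unset Strict Implicit.
Unset Printing Implicit Defensive.
Import Order.TTheory GRing.Theory Num.Theory.
Local Open Scope ring_scope.

Lemma denq_frac_dvd (n d : int) : (`|denq (n%:~R / d%:~R)| %| `|d|)%N.
Proof.
rewrite -[_ / _]/((n, d).1%:~R / (n, d).2%:~R) -fracqE den_fracq /=.
by case: ifP => _; [apply/dvdn_div/dvdn_gcdr | rewrite dvd1n].
Qed.

Lemma rat_addE (a b : rat) :
  a + b = (numq a * denq b + numq b * denq a)%:~R / (denq a * denq b)%:~R.
Proof.
rewrite intrD !intrM -{1}[a]divq_num_den -{1}[b]divq_num_den.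
by field; rewrite !intr_eq0 !denq_neq0.
Qed.

Lemma rat_mulE (a b : rat) :
  a * b = (numq a * numq b)%:~R / (denq a * denq b)%:~R.
Proof.
rewrite !intrM -{1}[a]divq_num_den -{1}[b]divq_num_den.
by field; rewrite !intr_eq0 !denq_neq0.
Qed.

Section Reduction.

Variable l : nat.
Hypothesis l_prime : prime l.

Lemma Fp_intr_eq0 (z : int) : ((z%:~R : 'F_l) == 0) = (l %| `|z|)%N.
Proof.
have pchar_l := pchar_Fp l_prime.
by case: z => n; rewrite ?NegzE ?mulrNz ?oppr_eq0 ?abszN /= (dvdn_pcharf pchar_l).
Qed.

Lemma Fp_denq_neq0 (a : rat) : integral_at l a -> (denq a)%:~R != 0 :> 'F_l.
Proof. by rewrite Fp_intr_eq0. Qed.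

Lemma ndvd_abszM (x y : int) :
  ~~ (l %| `|x|)%N -> ~~ (l %| `|y|)%N -> ~~ (l %| `|(x * y)%R|)%N.
Proof. by move=> hx hy; rewrite abszM Euclid_dvdM // negb_or hx hy. Qed.

Lemma integral_at_frac (n d : int) :
  ~~ (l %| `|d|)%N -> integral_at l (n%:~R / d%:~R).
Proof.
move=> ld; apply: contra ld => /dvdn_trans; apply; exact: denq_frac_dvd.
Qed.

Lemma redF_frac (n d : int) :
  ~~ (l %| `|d|)%N -> redF l (n%:~R / d%:~R) = n%:~R / d%:~R.
Proof.
move=> ld; set c : rat := _ / _.
have d0 : d != 0 by apply: contraNneq ld => ->.
have cross : numq c * d = n * denq c.
  by apply: (@intr_inj rat); rewrite !intrM numqE /c; field; rewrite intr_eq0.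
have ldc : ~~ (l %| `|denq c|)%N := integral_at_frac n ld.
by apply/eqP; rewrite eqr_div ?Fp_intr_eq0 // -!intrM cross mulrC.
Qed.

Lemma integral_at_int (z : int) : integral_at l z%:~R.
Proof. by rewrite /integral_at denq_int dvdn1; case: eqP l_prime => // ->. Qed.

Lemma integral_at_nat (n : nat) : integral_at l n%:R.
Proof. exact: (integral_at_int n). Qed.

Lemma integral_atN (a : rat) : integral_at l a -> integral_at l (- a).
Proof. by rewrite /integral_at denqN. Qed.

Lemma integral_atD (a b : rat) :
  integral_at l a -> integral_at l b -> integral_at l (a + b).
Proof. by move=> ha hb; rewrite rat_addE integral_at_frac ?ndvd_abszM. Qed.

Lemma integral_atM (a b : rat) :
  integral_at l a -> integral_at l b -> integral_at l (a * b).
Proof. by move=> ha hb; rewrite rat_mulE integral_at_frac ?ndvd_abszM. Qed.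

Lemma integral_atX (a : rat) (k : nat) : integral_at l a -> integral_at l (a ^+ k).
Proof.
by move=> ha; elim: k => [|k IHk]; rewrite ?expr0 ?(integral_at_nat 1) ?exprS ?integral_atM.
Qed.

Lemma redFN (a : rat) : redF l (- a) = - redF l a.
Proof. by rewrite /redF numqN denqN intrN mulNr. Qed.

Lemma redFD (a b : rat) : integral_at l a -> integral_at l b ->
  redF l (a + b) = redF l a + redF l b.
Proof.
move=> ha hb; rewrite rat_addE redF_frac ?ndvd_abszM // /redF intrD !intrM.
have da0 := Fp_denq_neq0 ha; have db0 := Fp_denq_neq0 hb.
by field; apply/andP.
Qed.

Lemma redFM (a b : rat) : integral_at l a -> integral_at l b ->
  redF l (a * b) = redF l a * redF l b.
Proof.
move=> ha hb; rewrite rat_mulE redF_frac ?ndvd_abszM // /redF !intrM.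
have da0 := Fp_denq_neq0 ha; have db0 := Fp_denq_neq0 hb.
by field; apply/andP.
Qed.

Lemma redF_nat (n : nat) : redF l n%:R = n%:R.
Proof. by rewrite /redF -[n%:R]/((n%:Z)%:~R : rat) numq_int denq_int divr1. Qed.

Lemma redFX (a : rat) (k : nat) : integral_at l a -> redF l (a ^+ k) = redF l a ^+ k.
Proof.
move=> ha; elim: k => [|k IHk]; first by rewrite !expr0 (redF_nat 1).
by rewrite !exprS redFM ?IHk ?integral_atX.
Qed.

Lemma redF_eq0 (c : rat) : (redF l c == 0) = (l %| `|numq c|)%N || ~~ integral_at l c.
Proof. by rewrite /redF mulf_eq0 invr_eq0 !Fp_intr_eq0 negbK. Qed.

Lemma integral_at_cubic_root (k : nat) (al be ga c : rat) : ~~ (l %| k)%N ->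
  integral_at l al -> integral_at l be -> integral_at l ga ->
  k%:R * c ^+ 3 + al * c ^+ 2 + be * c + ga = 0 -> integral_at l c.
Proof.
(* Clearing denominators gives [k n^3 = - d w] with [w] integral, so [l | d]
   would force [l | n], contradicting [coprime n d]. *)
move=> lk hal hbe hga root; set n := numq c; set d := denq c.
pose w := al * n%:~R ^+ 2 + be * n%:~R * d%:~R + ga * d%:~R ^+ 2.
have hw : integral_at l w.
  by rewrite /w !(integral_atD, integral_atM, integral_atX, integral_at_int).
have cleared : k%:R * n%:~R ^+ 3 = - (d%:~R * w) :> rat.
  apply/eqP; rewrite -subr_eq0 opprK /w /n numqE -/d.
  by rewrite -[X in _ == X](mulr0 (d%:~R ^+ 3)) -root; apply/eqP; ring.
have crossZ : k%:Z * n ^+ 3 * denq w = - (d * numq w).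
  apply: (@intr_inj rat); rewrite intrN !intrM (numqE w).
  transitivity (k%:R * n%:~R ^+ 3 * (denq w)%:~R : rat); first by ring.
  by rewrite cleared; ring.
rewrite /integral_at -/d; apply: contra lk => ld.
have : (l %| `|(k%:Z * n ^+ 3 * denq w)%R|)%N by rewrite crossZ abszN abszM dvdn_mulr.
rewrite 2!abszM abszX Euclid_dvdM // Euclid_dvdM // Euclid_dvdX // (negbTE hw) orbF.
case/orP => // /andP [ln _]; have := coprime_dvdl ln (coprime_num_den c).
by rewrite prime_coprime // ld.
Qed.

End Reduction.

(* Completing the square, [y^2 + a1 x y + a3 y = x^3 + a2 x^2 + a4 x + a6]
   iff [(2 y + a1 x + a3)^2 = div2_poly a1 a2 a3 a4 a6 x]. *)
Definition div2_poly (R : pzRingType) (a1 a2 a3 a4 a6 x : R) : R :=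
  (a1 * x + a3) ^+ 2 + 4 * (x ^+ 3 + a2 * x ^+ 2 + a4 * x + a6).

Definition div2_split (R : pzRingType) (a1 a2 a3 a4 a6 e1 e2 e3 : R) : Prop :=
  forall x, div2_poly a1 a2 a3 a4 a6 x = 4 * ((x - e1) * (x - e2) * (x - e3)).

Definition wdiv2 (E : wmodel) : rat -> rat :=
  div2_poly (wa1 E) (wa2 E) (wa3 E) (wa4 E) (wa6 E).

Definition wsplit (E : wmodel) : rat -> rat -> rat -> Prop :=
  div2_split (wa1 E) (wa2 E) (wa3 E) (wa4 E) (wa6 E).

(* [y^2 = x (x + a) (x + b)] *)
Definition two_torsion_model (a b : rat) : wmodel := WModel 0 (a + b) 0 (a * b) 0.

Lemma wsplit_coef (E : wmodel) (e1 e2 e3 : rat) : wsplit E e1 e2 e3 ->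
  [/\ wa1 E ^+ 2 + 4 * wa2 E = - 4 * (e1 + e2 + e3),
      2 * wa4 E + wa1 E * wa3 E = 2 * (e1 * e2 + e1 * e3 + e2 * e3) &
      wa3 E ^+ 2 + 4 * wa6 E = - 4 * (e1 * e2 * e3)].
Proof.
move=> split; move: (split 0) (split 1) (split (-1)); rewrite /div2_poly.
by split; lra.
Qed.

Lemma wdisc_split (E : wmodel) (e1 e2 e3 : rat) : wsplit E e1 e2 e3 ->
  wdisc E = 16 * ((e1 - e2) * (e1 - e3) * (e2 - e3)) ^+ 2.
Proof.
case/wsplit_coef; set b2 := wa1 E ^+ 2 + _; set b4 := 2 * wa4 E + _.
set b6 := wa3 E ^+ 2 + _ => eb2 eb4 eb6.
have disc_b : 4 * wdisc E = - b2 ^+ 2 * (b2 * b6 - b4 ^+ 2) - 32 * b4 ^+ 3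
                            - 108 * b6 ^+ 2 + 36 * b2 * b4 * b6.
  by rewrite /wdisc /b2 /b4 /b6; ring.
by apply: (mulfI (_ : 4 != 0 :> rat)) => //; rewrite disc_b eb2 eb4 eb6; ring.
Qed.

Lemma iso_two_torsion_split (a b : rat) (E : wmodel) :
  iso_models (two_torsion_model a b) E -> exists u r : rat,
    u != 0 /\ wsplit E (- r / u ^+ 2) ((- a - r) / u ^+ 2) ((- b - r) / u ^+ 2).
Proof.
case=> u [r [s [t [u0 iso]]]]; exists u, r; split => // X.
(* The change of variables at [Y = 0] and [Y = 1] determines the transformed
   [a1 X + a3] and right-hand side. *)
move: (iso X 0) (iso X 1).
rewrite /weq /= !(mulr0, mul0r, mulr1, addr0, add0r, expr0n, expr1n) /= => iso0 iso1.
set x := u ^+ 2 * X + r; set y := s * u ^+ 2 * X + t.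
set B := wa1 E * X + wa3 E; set g := X ^+ 3 + wa2 E * X ^+ 2 + wa4 E * X + wa6 E.
have Bu : u ^+ 3 * B = 2 * y.
  apply: (mulfI (expf_neq0 3 u0)); rewrite mulrA -exprD /B /y; lra.
have gu : u ^+ 6 * g = x ^+ 3 + (a + b) * x ^+ 2 + a * b * x - y ^+ 2.
  by rewrite /g /x /y; lra.
apply: (mulfI (expf_neq0 6 u0)).
transitivity ((u ^+ 3 * B) ^+ 2 + 4 * (u ^+ 6 * g)); first by rewrite /div2_poly /B /g; ring.
by rewrite Bu gu /x; field.
Qed.

Lemma wdisc_iso_two_torsion (a b : rat) (E : wmodel) :
  iso_models (two_torsion_model a b) E ->
  exists2 u : rat, u != 0 & wdisc E * u ^+ 12 = 16 * (a * b * (a - b)) ^+ 2.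
Proof.
case/iso_two_torsion_split => u [r [u0 split]]; exists u => //.
by rewrite (wdisc_split split); field.
Qed.

Definition wpoints (F : finFieldType) (a1 a2 a3 a4 a6 : F) : {set F * F} :=
  [set P : F * F | P.2 ^+ 2 + a1 * P.1 * P.2 + a3 * P.2
                   == P.1 ^+ 3 + a2 * P.1 ^+ 2 + a4 * P.1 + a6].

Section PointCount.

Variable F : finFieldType.
Hypothesis two_neq0 : 2 != 0 :> F.

Let four_neq0 : 4 != 0 :> F.
Proof. by rewrite (_ : 4 = 2 * 2) ?mulf_neq0 // -natrM. Qed.

Lemma card_sqr_eq (d : F) : #|[set z : F | z ^+ 2 == d]|
  = if d == 0 then 1%N else (2 * [exists z, z ^+ 2 == d])%N.
Proof.
have [-> | d0] := eqVneq d 0.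
  by rewrite -[RHS](cards1 (0 : F)); apply: eq_card => z; rewrite !inE sqrf_eq0.
case: existsP => [[z0 /eqP sq_z0] | no_sqrt]; last first.
  apply/eqP; rewrite cards_eq0; apply/eqP/setP => z; rewrite !inE.
  by apply/negP => sq_z; apply: no_sqrt; exists z.
have z0_neq_opp : z0 != - z0.
  apply: contraNneq d0 => opp; rewrite -sq_z0 sqrf_eq0 -(mulrI_eq0 _ (lregP two_neq0)).
  by rewrite mulr_natl mulr2n {2}opp subrr.
transitivity #|[set z0; - z0]|; last by rewrite cards2 z0_neq_opp.
by apply: eq_card => z; rewrite !inE -sq_z0 eqf_sqr.
Qed.

Lemma card_wpoints (a1 a2 a3 a4 a6 : F) : #|wpoints a1 a2 a3 a4 a6|
  = (\sum_x #|[set z : F | z ^+ 2 == div2_poly a1 a2 a3 a4 a6 x]|)%N.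
Proof.
rewrite -sum1_card (eq_bigl _ _ (fun P => in_set _ P)) /=.
rewrite -(pair_big_dep xpredT (fun x y => y ^+ 2 + a1 * x * y + a3 * y
                 == x ^+ 3 + a2 * x ^+ 2 + a4 * x + a6) (fun _ _ => 1%N)) /=.
apply: eq_bigr => x _; rewrite sum1_card.
pose complete_sq y := 2 * y + (a1 * x + a3).
have inj_sq : injective complete_sq by move=> y y' /addIr /(mulfI two_neq0).
rewrite -(card_preimset _ inj_sq); apply: eq_card => y.
rewrite unfold_in !inE /= -[RHS]subr_eq0.
have -> : complete_sq y ^+ 2 - div2_poly a1 a2 a3 a4 a6 x
          = 4 * (y ^+ 2 + a1 * x * y + a3 * y - (x ^+ 3 + a2 * x ^+ 2 + a4 * x + a6)).
  by rewrite /complete_sq /div2_poly; ring.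
by rewrite mulf_eq0 (negbTE four_neq0) subr_eq0.
Qed.

Lemma card_wpoints_split (a1 a2 a3 a4 a6 e1 e2 e3 : F) :
  uniq [:: e1; e2; e3] -> div2_split a1 a2 a3 a4 a6 e1 e2 e3 ->
  exists2 k, (k <= #|F| - 3)%N & #|wpoints a1 a2 a3 a4 a6| = (3 + 2 * k)%N.
Proof.
set roots := [:: e1; e2; e3] => uniq_roots split.
have div2_eq0 x : (div2_poly a1 a2 a3 a4 a6 x == 0) = (x \in roots).
  by rewrite split mulf_eq0 (negbTE four_neq0) !mulf_eq0 !subr_eq0 !inE /= orbA.
have card_roots : #|roots| = 3%N by rewrite (card_uniqP uniq_roots).
rewrite card_wpoints (bigID (mem roots)) /=.
exists (\sum_(x | x \notin roots) [exists z, z ^+ 2 == div2_poly a1 a2 a3 a4 a6 x])%N.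
  apply: (@leq_trans (\sum_(x | x \notin roots) 1)%N).
    by apply: leq_sum => x _; apply: leq_b1.
  by rewrite sum1_card -(cardC (mem roots)) card_roots addKn; apply/eq_leq/eq_card.
congr (_ + _)%N.
  by rewrite -card_roots -sum1_card; apply: eq_bigr => x; rewrite card_sqr_eq div2_eq0 => ->.
by rewrite big_distrr; apply: eq_bigr => x; rewrite card_sqr_eq div2_eq0 => /negbTE ->.
Qed.

End PointCount.

(* Dispatch on the syntax of the goal: letting [apply: integral_at_nat] try to
   unify [_%:R] with a compound rational triggers a very costly evaluation. *)
Ltac integral_at_closure :=
  solve [repeat match goal with
  | |- is_true (prime _) => assumption
  | |- is_true (integral_at _ (_ + _)) => apply: integral_atD
  | |- is_true (integral_at _ (_ * _)) => apply: integral_atM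
  | |- is_true (integral_at _ (- _)) => apply: integral_atN
  | |- is_true (integral_at _ (_ ^+ _)) => apply: integral_atX
  | |- is_true (integral_at _ _%:R) => apply: integral_at_nat
  | |- is_true (integral_at _ _) => assumption
  end].

Section GoodReduction.

Variables (l : nat) (E : wmodel).
Hypothesis l_prime : prime l.
Hypotheses (int_a1 : integral_at l (wa1 E)) (int_a2 : integral_at l (wa2 E))
           (int_a3 : integral_at l (wa3 E)) (int_a4 : integral_at l (wa4 E))
           (int_a6 : integral_at l (wa6 E)).

Lemma integral_at_wdisc : integral_at l (wdisc E).
Proof. rewrite /wdisc /=; integral_at_closure. Qed.

Hypothesis l_odd : odd l.

Lemma Fp_two_neq0 : 2 != 0 :> 'F_l.
Proof. by rewrite -(dvdn_pcharf (pchar_Fp l_prime)) gtnNdvd ?odd_prime_gt2. Qed.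

Lemma integral_at_wdiv2_root (c : rat) : wdiv2 E c = 0 -> integral_at l c.
Proof.
move=> root; apply: (@integral_at_cubic_root l l_prime 4 (wa1 E ^+ 2 + 4 * wa2 E)
  (2 * (2 * wa4 E + wa1 E * wa3 E)) (wa3 E ^+ 2 + 4 * wa6 E)); try integral_at_closure.
- by rewrite -[4%N]/(2 ^ 2)%N Euclid_dvdX // gtnNdvd ?odd_prime_gt2.
- by rewrite -root /wdiv2 /div2_poly; ring.
Qed.

Lemma integral_at_wsplit (e1 e2 e3 : rat) : wsplit E e1 e2 e3 ->
  [/\ integral_at l e1, integral_at l e2 & integral_at l e3].
Proof.
move=> split; split; apply: integral_at_wdiv2_root;
  by rewrite /wdiv2 split subrr !(mulr0, mul0r).
Qed.

Lemma redF_wdiv2 (x : rat) : integral_at l x ->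
  redF l (wdiv2 E x) = div2_poly (redF l (wa1 E)) (redF l (wa2 E)) (redF l (wa3 E))
                                 (redF l (wa4 E)) (redF l (wa6 E)) (redF l x).
Proof.
move=> hx; rewrite /wdiv2 /div2_poly.
by rewrite !(redF_nat, redFX, redFM, redFD); try integral_at_closure.
Qed.

Lemma redF_wsplit (e1 e2 e3 : rat) : wsplit E e1 e2 e3 ->
  div2_split (redF l (wa1 E)) (redF l (wa2 E)) (redF l (wa3 E)) (redF l (wa4 E))
             (redF l (wa6 E)) (redF l e1) (redF l e2) (redF l e3).
Proof.
move=> split; have [int_e1 int_e2 int_e3] := integral_at_wsplit split.
move=> x; pose n : rat := (x : nat)%:R.
have := congr1 (redF l) (split n); rewrite redF_wdiv2; last exact: integral_at_nat.
rewrite /n redF_nat natr_Zp => ->.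
by rewrite !(redF_nat, redFM, redFD, redFN) ?natr_Zp; try integral_at_closure.
Qed.

Lemma redF_wsplit_uniq (e1 e2 e3 : rat) :
  ~~ (l %| `|numq (wdisc E)|)%N -> wsplit E e1 e2 e3 ->
  uniq [:: redF l e1; redF l e2; redF l e3].
Proof.
move=> disc_unit split; have [int_e1 int_e2 int_e3] := integral_at_wsplit split.
have : redF l (wdisc E) != 0.
  by rewrite redF_eq0 // (negbTE disc_unit) integral_at_wdisc.
rewrite (wdisc_split split) !(redF_nat, redFX, redFM, redFD, redFN); try integral_at_closure.
rewrite mulf_eq0 negb_or sqrf_eq0 !mulf_eq0 !negb_or !subr_eq0.
case/and3P => _ /andP [ne12 ne13] ne23.
by rewrite !cons_uniq !inE !negb_or ne12 ne13 ne23.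
Qed.

End GoodReduction.

Lemma two_torsion_not_anomalous_odd (l : nat) (a b : rat) (E : wmodel) :
  prime l -> odd l -> iso_models (two_torsion_model a b) E -> good_model_at l E ->
  ~~ (l %| npoints l E)%N.
Proof.
move=> l_prime l_odd /iso_two_torsion_split [u [r [_ split]]].
case/and5P=> int_a1 int_a2 int_a3 int_a4 /andP [int_a6 disc_unit].
have uniq_e := redF_wsplit_uniq l_prime int_a1 int_a2 int_a3 int_a4 int_a6 l_odd disc_unit split.
have split_e := redF_wsplit l_prime int_a1 int_a2 int_a3 int_a4 int_a6 l_odd split.
have [k k_le card_eq] := card_wpoints_split (Fp_two_neq0 l_prime l_odd) uniq_e split_e.
rewrite card_Fp // in k_le; rewrite /npoints -/(wpoints _ _ _ _ _) card_eq.
have l_gt2 := odd_prime_gt2 l_odd l_prime.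
rewrite (_ : (3 + 2 * k).+1 = 2 * (k + 2))%N; last lia.
by rewrite Euclid_dvdM // !gtnNdvd //; lia.
Qed.

Lemma unit_mulX_dvdn_exp (l m e K : nat) (c u : rat) : prime l -> u != 0 ->
  integral_at l c -> ~~ (l %| `|numq c|)%N -> ~~ (l %| K)%N ->
  c * u ^+ m = (l ^ e * K)%:R -> (m %| e)%N.
Proof.
move=> l_prime u0 int_c unit_c lK cu.
set N := numq c; set M := denq c; set A := numq u; set B := denq u.
have cross : N * A ^+ m = (l ^ e * K)%:Z * M * B ^+ m.
  apply: (@intr_inj rat); rewrite !intrM !rmorphXn /= /N /A !numqE exprMn.
  by rewrite -[((l ^ e * K)%:Z)%:~R]/((l ^ e * K)%:R : rat) -cu; ring.
have N0 : (0 < `|N|)%N by rewrite lt0n; apply: contraNneq unit_c => ->.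
have A0 : (0 < `|A|)%N by rewrite absz_gt0 numq_eq0.
have M0 : (0 < `|M|)%N by rewrite absz_gt0 denq_neq0.
have B0 : (0 < `|B|)%N by rewrite absz_gt0 denq_neq0.
have K0 : (0 < K)%N by rewrite lt0n; apply: contraNneq lK => ->.
have := congr1 (fun z => logn l `|z|) cross; rewrite /= !abszM !abszX /=.
rewrite !lognM ?muln_gt0 ?expn_gt0 ?N0 ?A0 ?M0 ?B0 ?K0 ?prime_gt0 // pfactorK // !lognX.
have logn0 x : ~~ (l %| x)%N -> logn l x = 0%N.
  by move=> lx; rewrite logn_coprime // prime_coprime.
rewrite (logn0 _ unit_c) (logn0 _ int_c) (logn0 _ lK) add0n !addn0 => val_eq.
have -> : e = (m * logn l `|A| - m * logn l `|B|)%N by rewrite val_eq addnK.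
by rewrite -mulnBr dvdn_mulr.
Qed.

Lemma two_torsion_not_good_at2 (a b : rat) (K : nat) (E : wmodel) : odd K ->
  16 * (a * b * (a - b)) ^+ 2 = (2 ^ 6 * K)%:R ->
  iso_models (two_torsion_model a b) E -> ~~ good_model_at 2 E.
Proof.
move=> odd_K disc_ab isoE; apply/negP => /and5P [i1 i2 i3 i4 /andP [i6 disc_unit]].
have [u u0 disc_u] := wdisc_iso_two_torsion isoE.
suff : (12 %| 6)%N by [].
apply: (unit_mulX_dvdn_exp _ u0 _ disc_unit _ (etrans disc_u disc_ab)) => //.
- exact: integral_at_wdisc.
- by rewrite dvdn2 odd_K.
Qed.

Lemma odd_big_prod (s : seq nat) : all odd s -> odd (\prod_(d <- s) d).
Proof.
move/allP=> odd_s; rewrite big_seq; elim/big_ind: _ => // x y ox oy.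
by rewrite oddM ox oy.
Qed.

Lemma E_D_two_torsion (eps : rat) (p q D : nat) : eps ^+ 2 = 1 ->
  E_D eps p q D = two_torsion_model (eps * p%:R * D%:R) (eps * q%:R * D%:R).
Proof.
move=> eps2; rewrite /E_D /two_torsion_model natrD natrM; congr WModel; first ring.
by rewrite -[LHS]mul1r -eps2; ring.
Qed.

Lemma twin_two_torsion_disc (eps : rat) (p D : nat) : eps ^+ 2 = 1 ->
  16 * (eps * p%:R * D%:R * (eps * (p + 2)%:R * D%:R)
        * (eps * p%:R * D%:R - eps * (p + 2)%:R * D%:R)) ^+ 2
  = (2 ^ 6 * (p * (p + 2) * D ^ 3) ^ 2)%:R.
Proof.
move=> eps2; rewrite natrM !natrX natrM natrM natrX natrD.
transitivity (64 * (eps ^+ 2) ^+ 3 * (p%:R * (p%:R + 2) * D%:R ^+ 3) ^+ 2 : rat).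
  by ring.
by rewrite eps2; ring.
Qed.

Theorem proposition2p4 (p q : nat) (eps : rat) (Ds : seq nat) :
  prime p -> prime q -> odd p -> odd q -> q = (p + 2)%N ->
  (eps = 1 \/ eps = -1) ->
  uniq Ds -> all prime Ds -> all odd Ds ->
  coprime (p * q) (\prod_(d <- Ds) d) ->
  forall l : nat, ~ anomalous (E_D eps p q (\prod_(d <- Ds) d)) l.
Proof.
move=> _ _ odd_p _ -> eps_pm1 _ _ odd_Ds _ l [l_prime [E [isoE [good l_dvd]]]].
have odd_D := odd_big_prod odd_Ds; set D := \prod_(d <- Ds) d in isoE odd_D.
have eps2 : eps ^+ 2 = 1 by case: eps_pm1 => ->; rewrite ?sqrrN expr1n.
rewrite E_D_two_torsion // in isoE.
have [l2 | l_odd] := even_prime l_prime; last first.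
  by move: l_dvd; apply/negP; apply: two_torsion_not_anomalous_odd isoE good.
move: good; rewrite l2; apply/negP.
apply: (two_torsion_not_good_at2 _ (twin_two_torsion_disc p D eps2) isoE).
by rewrite oddX oddM oddM oddD oddX odd_p odd_D.
Qed.
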